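(* Let $\mathscr{R}_1, \mathscr{R}_2$ be von Neumann algebras acting on a Hilbert space $\mathscr{H}$, and let $A$ be an operator in $\mathscr{R}_1\cap\mathscr{R}_2$. Then $\mathscr{R}_1A\cap\mathscr{R}_2 = \mathscr{R}_1A\cap\mathscr{R}_2A = (\mathscr{R}_1\cap\mathscr{R}_2)A$.
   Context: For a set $\mathscr{M}$ of operators and an operator $A$, $\mathscr{M}A = \{MA : M\in\mathscr{M}\}$. *)

From HB Require Import structures.
From mathcomp Require Import all_boot all_order all_algebra.
From mathcomp Require Import complex.
From mathcomp Require Import classical_sets reals.
Set Implicit Arguments. Unset Strict Implicit. Unset Printing Implicit Defensive.
Import Order.TTheory GRing.Theory Num.Theory.
Local Open Scope ring_scope.
Local Open Scope classical_set_scope.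

Section Hilbert.
Variable R : realType.
Local Notation C := (R[i])%C.
Variable H : lmodType C.
Variable ip : H -> H -> C.  (* inner product, linear in the first variable *)

Definition hnorm (x : H) : C := sqrtC (ip x x).

Record is_hilbert_space : Prop := {
  ip_linear : forall (a : C) (x y z : H), ip (a *: x + y) z = a * ip x z + ip y z;
  ip_conj : forall x y : H, ip y x = (ip x y)^*;
  ip_ge0 : forall x : H, 0 <= ip x x;
  ip_eq0 : forall x : H, ip x x = 0 -> x = 0;
  ip_complete : forall u : nat -> H,
    (forall eps : C, 0 < eps -> exists N : nat, forall m n : nat,
        (N <= m)%N -> (N <= n)%N -> hnorm (u m - u n) < eps) ->
    exists l : H, forall eps : C, 0 < eps -> exists N : nat, forall n : nat,
        (N <= n)%N -> hnorm (u n - l) < eps }.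

Definition bounded_operator (T : H -> H) : Prop :=
  (forall (a : C) (x y : H), T (a *: x + y) = a *: T x + T y) /\
  exists k : C, 0 <= k /\ forall x : H, hnorm (T x) <= k * hnorm x.

Definition is_adjoint (T S : H -> H) : Prop :=
  forall x y : H, ip (T x) y = ip x (S y).

Definition in_so_closure (M : set (H -> H)) (T : H -> H) : Prop :=
  forall (xs : seq H) (eps : C), 0 < eps ->
    exists2 S, M S & forall x, x \in xs -> hnorm (T x - S x) < eps.

Record von_neumann_algebra (M : set (H -> H)) : Prop := {
  vn_bounded : forall T, M T -> bounded_operator T;
  vn_id : M id;
  vn_add : forall S T, M S -> M T -> M (fun x => S x + T x);
  vn_scale : forall (a : C) T, M T -> M (fun x => a *: T x);
  vn_mul : forall S T, M S -> M T -> M (S \o T);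
  vn_adj : forall T, M T -> exists2 S, M S & is_adjoint T S;
  vn_so_closed : forall T, bounded_operator T -> in_so_closure M T -> M T }.

End Hilbert.

Definition rmul_set (H : Type) (M : set (H -> H)) (A : H -> H) : set (H -> H) :=
  [set S \o A | S in M].

From HB Require Import structures.
From mathcomp Require Import all_boot all_order all_algebra.
From mathcomp Require Import complex.
From mathcomp Require Import boolp classical_sets reals.
From mathcomp Require Import ring.

(** If [B] is in [R1] and [BA] is in [R2], then [C = BE], with [E] the range
    projection of [A], lies in [R1 ∩ R2] and [CA = BA]; this gives
    [R1A ∩ R2 ⊆ (R1 ∩ R2)A], and the inclusions
    [(R1 ∩ R2)A ⊆ R1A ∩ R2A ⊆ R1A ∩ R2] are immediate.

    [E] is built without spectral theory.  For small [c > 0] the operator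
    [K = I - c AA*] satisfies [0 <= K <= I] and [K^2 <= K], so the moments
    [<K^j y, y>] form a nonnegative nonincreasing sequence, and the identity
    [|K^n y - K^m y|^2 = <K^2n y, y> + <K^2m y, y> - 2 <K^(n+m) y, y>] shows that
    [K^n y] converges.  Its limit [Q y] is the projection of [y] onto
    [ker A* = (range A)^perp], and [E = I - Q].  Finally [B(I - K^n)] lies in
    [R1], and it equals [c (BA) A* (I + K + ... + K^(n-1))], which lies in [R2];
    both algebras are strongly closed, so [BE = lim B(I - K^n)] lies in both. *)

Set Implicit Arguments. Unset Strict Implicit. Unset Printing Implicit Defensive.
Import Order.TTheory Order.NatMonotonyTheory GRing.Theory Num.Theory.
Local Open Scope ring_scope.

Section InnerProduct.
Variable R : realType.
Local Notation C := (R[i])%C.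
Variables (H : lmodType C) (ip : H -> H -> C).
Hypothesis hH : is_hilbert_space ip.

Definition sqnorm (x : H) : C := ip x x.

Lemma ipDl x y z : ip (x + y) z = ip x z + ip y z.
Proof. by rewrite -[x in LHS]scale1r (ip_linear hH) mul1r. Qed.

Lemma ip0l z : ip 0 z = 0.
Proof. by apply: (addrI (ip 0 z)); rewrite -ipDl !addr0. Qed.

Lemma ipZl a x z : ip (a *: x) z = a * ip x z.
Proof. by rewrite -[a *: x]addr0 (ip_linear hH) ip0l addr0. Qed.

Lemma ipNl x z : ip (- x) z = - ip x z.
Proof. by rewrite -scaleN1r ipZl mulN1r. Qed.

Lemma ipBl x y z : ip (x - y) z = ip x z - ip y z.
Proof. by rewrite ipDl ipNl. Qed.

Lemma ipC x y : ip x y = (ip y x)^*.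
Proof. exact: (ip_conj hH). Qed.

Lemma ipDr x y z : ip x (y + z) = ip x y + ip x z.
Proof. by rewrite ipC ipDl rmorphD /= -!ipC. Qed.

Lemma ipZr a x z : ip x (a *: z) = a^* * ip x z.
Proof. by rewrite ipC ipZl rmorphM /= -ipC. Qed.

Lemma ip0r z : ip z 0 = 0.
Proof. by rewrite ipC ip0l rmorph0 /=. Qed.

Lemma ipNr x z : ip x (- z) = - ip x z.
Proof. by rewrite ipC ipNl rmorphN /= -ipC. Qed.

Lemma ipBr x y z : ip x (y - z) = ip x y - ip x z.
Proof. by rewrite ipDr ipNr. Qed.

Lemma sqnorm_ge0 x : 0 <= sqnorm x.
Proof. exact: (ip_ge0 hH). Qed.

Lemma sqnorm_eq0 x : sqnorm x = 0 -> x = 0.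
Proof. exact: (ip_eq0 hH). Qed.

Lemma sqnormN x : sqnorm (- x) = sqnorm x.
Proof. by rewrite /sqnorm ipNl ipNr opprK. Qed.

Lemma sqnormD x y : sqnorm (x + y) = sqnorm x + sqnorm y + (ip x y + ip y x).
Proof. by rewrite /sqnorm !ipDl !ipDr; ring. Qed.

Lemma sqnormB x y : sqnorm (x - y) = sqnorm x + sqnorm y - (ip x y + ip y x).
Proof. by rewrite sqnormD sqnormN ipNr ipNl; ring. Qed.

Lemma sqnormZ a x : sqnorm (a *: x) = a * a^* * sqnorm x.
Proof. by rewrite /sqnorm ipZl ipZr mulrA. Qed.

Lemma sqnormD_le x y : sqnorm (x + y) <= 2%:R * (sqnorm x + sqnorm y).
Proof.
have <- : sqnorm (x + y) + sqnorm (x - y) = 2%:R * (sqnorm x + sqnorm y).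
  by rewrite sqnormD sqnormB; ring.
by rewrite lerDl sqnorm_ge0.
Qed.

Lemma hnorm_ltE x (e : C) : 0 < e -> (hnorm ip x < e) = (sqnorm x < e ^+ 2).
Proof.
move=> e_gt0; rewrite /hnorm -[in LHS](sqrCK (ltW e_gt0)).
by rewrite ltr_sqrtC ?nnegrE ?exprn_ge0 ?sqnorm_ge0 ?ltW.
Qed.

Lemma adjoint_unique (T S1 S2 : H -> H) :
  is_adjoint ip T S1 -> is_adjoint ip T S2 -> S1 = S2.
Proof.
move=> adj1 adj2; apply: funext => y; apply/eqP; rewrite -subr_eq0; apply/eqP.
by apply: sqnorm_eq0; rewrite /sqnorm ipBr -adj1 -adj2 subrr.
Qed.

End InnerProduct.

Section NonnegativeSequences.
Variable R : realType.
Local Notation C := (R[i])%C.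

Lemma complex_archi (x : C) : 0 <= x -> exists n : nat, x < n%:R.
Proof.
move=> x_ge0; have Im_x := ger0_Im x_ge0.
have Re_x_ge0 : 0 <= complex.Re x by move: x_ge0; rewrite lecE => /andP[].
exists (Num.Def.archi_bound (complex.Re x)).
rewrite -(rmorph_nat (real_complex R)) ltcE /= Im_x eqxx /=.
exact: archi_boundP.
Qed.

Lemma ge0_seq_almost_inf (b : nat -> C) : (forall j, 0 <= b j) ->
  forall e : C, 0 < e -> exists N, forall m, b N - b m < e.
Proof.
move=> b_ge0 e e_gt0; apply: contrapT => no_N.
have drop_e N : exists m, e <= b N - b m.
  apply: contrapT => no_m; apply: no_N; exists N => m.
  rewrite real_ltNge ?realB ?ger0_real ?(ltW e_gt0) //.
  by apply/negP => le_e; apply: no_m; exists m.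
have drop_ke k : exists m, k%:R * e <= b 0%N - b m.
  elim: k => [|k [m hm]]; first by exists 0%N; rewrite mul0r subrr.
  have [m' hm'] := drop_e m; exists m'.
  rewrite mulrSr mulrDl mul1r (_ : b 0%N - b m' = (b 0%N - b m) + (b m - b m')).
    exact: lerD.
  by ring.
have [n b0_lt] := complex_archi (divr_ge0 (b_ge0 0%N) (ltW e_gt0)).
have [m hm] := drop_ke n.
have b0_lt_ne : b 0%N < n%:R * e by rewrite -ltr_pdivrMr.
have := lt_le_trans b0_lt_ne hm; rewrite ltrBrDr gtrDl => bm_lt0.
by have := lt_le_trans bm_lt0 (b_ge0 m); rewrite ltxx.
Qed.

End NonnegativeSequences.

Section Convergence.
Variable R : realType.
Local Notation C := (R[i])%C.
Variables (H : lmodType C) (ip : H -> H -> C).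
Hypothesis hH : is_hilbert_space ip.
Local Notation sqnorm := (sqnorm ip).

Definition converges (u : nat -> H) (l : H) := forall e : C, 0 < e ->
  exists N, forall n, (N <= n)%N -> sqnorm (u n - l) < e.

Lemma converges_dominated u l w p (k : C) : converges u l -> 0 <= k ->
  (forall n, sqnorm (w n - p) <= k * sqnorm (u n - l)) -> converges w p.
Proof.
move=> cu k_ge0 hw e e_gt0.
have k1_gt0 : 0 < k + 1 by rewrite ltr_wpDl.
have [N hN] := cu (e / (k + 1)) (divr_gt0 e_gt0 k1_gt0).
exists N => n Nn; apply: le_lt_trans (hw n) _.
apply: (@le_lt_trans _ _ ((k + 1) * sqnorm (u n - l))).
  by rewrite ler_wpM2r ?(sqnorm_ge0 hH) // lerDl.
by rewrite -ltr_pdivlMl // mulrC hN.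
Qed.

Lemma converges_dominated2 u l v m w p : converges u l -> converges v m ->
  (forall n, sqnorm (w n - p) <= 2%:R * (sqnorm (u n - l) + sqnorm (v n - m))) ->
  converges w p.
Proof.
move=> cu cv hw e e_gt0.
have e4_gt0 : 0 < e / 4%:R by rewrite divr_gt0.
have [N1 h1] := cu _ e4_gt0; have [N2 h2] := cv _ e4_gt0.
exists (maxn N1 N2) => n; rewrite geq_max => /andP[n1 n2].
apply: le_lt_trans (hw n) _.
rewrite (_ : e = 2%:R * (e / 4%:R + e / 4%:R)); last by field.
by rewrite ltr_pM2l // ltrD // ?h1 ?h2.
Qed.

Lemma converges_unique u l l' : converges u l -> converges u l' -> l = l'.
Proof.
move=> cl cl'; apply/eqP; rewrite -subr_eq0; apply/eqP; apply: (sqnorm_eq0 hH).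
apply/le_anti; rewrite (sqnorm_ge0 hH) andbT; apply/ler_addgt0Pr => e e_gt0.
have cl_rev : converges (fun n => l - u n) 0.
  move=> e' e'_gt0; have [N hN] := cl e' e'_gt0; exists N => n /hN.
  by rewrite subr0 -(sqnormN hH) opprB.
have cst : converges (fun => l - l') 0.
  apply: (converges_dominated2 cl_rev cl') => n; rewrite !subr0.
  have -> : l - l' = (l - u n) + (u n - l') by rewrite addrA subrK.
  exact: (sqnormD_le hH).
have [N /(_ N (leqnn N))] := cst e e_gt0.
by rewrite subr0 add0r => /ltW.
Qed.

Lemma convergesZD u l v m (a : C) : converges u l -> converges v m ->
  converges (fun n => a *: u n + v n) (a *: l + m).
Proof.
move=> cu cv.
have cau : converges (fun n => a *: u n) (a *: l).
  apply: (converges_dominated cu (mul_conjC_ge0 a)) => n.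
  by rewrite -scalerBr (sqnormZ hH).
apply: (converges_dominated2 cau cv) => n.
by rewrite opprD addrACA (sqnormD_le hH).
Qed.

Lemma converges_shift u l : converges u l -> converges (fun n => u n.+1) l.
Proof. by move=> cu e /cu[N hN]; exists N => n Nn; apply/hN/leqW. Qed.

Lemma converges_cst l : converges (fun => l) l.
Proof. by move=> e e_gt0; exists 0%N => n _; rewrite subrr /sqnorm (ip0l hH). Qed.

Lemma cauchy_converges u :
  (forall e : C, 0 < e -> exists N, forall m n, (N <= m)%N -> (N <= n)%N ->
     sqnorm (u m - u n) < e) ->
  exists l, converges u l.
Proof.
move=> u_cauchy.
have [l hl] : exists l, forall e : C, 0 < e ->
    exists N, forall n, (N <= n)%N -> hnorm ip (u n - l) < e.
  apply: (ip_complete hH) => e e_gt0.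
  have [N hN] := u_cauchy (e ^+ 2) (exprn_gt0 _ e_gt0).
  by exists N => m n Nm Nn; rewrite (hnorm_ltE hH _ e_gt0) hN.
exists l => e e_gt0; have sqrt_gt0 : 0 < sqrtC e by rewrite sqrtC_gt0.
have [N hN] := hl _ sqrt_gt0.
by exists N => n /hN; rewrite (hnorm_ltE hH _ sqrt_gt0) sqrtCK.
Qed.

Lemma in_so_closure_converges (M : set (H -> H)) (F : nat -> H -> H) (G : H -> H) :
  (forall n, M (F n)) -> (forall x, converges (fun n => F n x) (G x)) ->
  in_so_closure ip M G.
Proof.
move=> MF cF xs e e_gt0.
have e2_gt0 : 0 < e ^+ 2 by apply: exprn_gt0.
have [N hN] : exists N, forall x, x \in xs -> forall n, (N <= n)%N ->
    sqnorm (F n x - G x) < e ^+ 2.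
  elim: xs => [|a xs [N IH]]; first by exists 0%N.
  have [Na ha] := cF a _ e2_gt0.
  exists (maxn Na N) => x; rewrite inE => /orP [/eqP -> | x_xs] n;
    rewrite geq_max => /andP[n1 n2]; [exact: ha | exact: IH].
exists (F N) => // x x_xs.
by rewrite (hnorm_ltE hH _ e_gt0) -(sqnormN hH) opprB; apply: hN.
Qed.

End Convergence.

Section Operators.
Variable R : realType.
Local Notation C := (R[i])%C.
Variables (H : lmodType C) (ip : H -> H -> C).
Hypothesis hH : is_hilbert_space ip.
Local Notation sqnorm := (sqnorm ip).

Definition linop (T : H -> H) := forall a x y, T (a *: x + y) = a *: T x + T y.

Section Linear.
Variable T : H -> H.
Hypothesis linT : linop T.

Lemma linopD x y : T (x + y) = T x + T y.
Proof. by rewrite -[x]scale1r linT !scale1r. Qed.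

Lemma linop0 : T 0 = 0.
Proof. by apply: (addrI (T 0)); rewrite -linopD !addr0. Qed.

Lemma linopZ a x : T (a *: x) = a *: T x.
Proof. by rewrite -[a *: x]addr0 linT linop0 addr0. Qed.

Lemma linopB x y : T (x - y) = T x - T y.
Proof. by rewrite linopD -scaleN1r linopZ scaleN1r. Qed.

End Linear.

Lemma bounded_linop T : bounded_operator ip T -> linop T.
Proof. by case. Qed.

Lemma bounded_sqnorm T : bounded_operator ip T ->
  exists2 k, 0 <= k & forall x, sqnorm (T x) <= k * sqnorm x.
Proof.
move=> [_ [k [k_ge0 hk]]]; exists (k ^+ 2); first exact: exprn_ge0.
move=> x; rewrite -[sqnorm (T x)]sqrtCK -[sqnorm x]sqrtCK -exprMn.
by rewrite ler_pXn2r ?nnegrE ?mulr_ge0 ?sqrtC_ge0 ?(sqnorm_ge0 hH) //; exact: hk.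
Qed.

Lemma bounded_operator_sqnorm T k : linop T -> 0 <= k ->
  (forall x, sqnorm (T x) <= k ^+ 2 * sqnorm x) -> bounded_operator ip T.
Proof.
move=> linT k_ge0 hk; split=> //; exists k; split=> // x.
have kx_ge0 : 0 <= k * sqrtC (sqnorm x) by rewrite mulr_ge0 // sqrtC_ge0 (sqnorm_ge0 hH).
rewrite /hnorm -[X in _ <= X](sqrCK kx_ge0) exprMn sqrtCK.
by rewrite ler_sqrtC ?nnegrE ?mulr_ge0 ?exprn_ge0 ?(sqnorm_ge0 hH) // hk.
Qed.

End Operators.

Section RangeProjection.
Variable R : realType.
Local Notation C := (R[i])%C.
Variables (H : lmodType C) (ip : H -> H -> C).
Hypothesis hH : is_hilbert_space ip.
Local Notation sqnorm := (sqnorm ip).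
Local Notation converges := (converges ip).

Variables A As : H -> H.
Hypothesis adjA : is_adjoint ip A As.
Hypotheses (linA : linop A) (linAs : linop As).
Variables kA kAs : C.
Hypotheses (kA_ge0 : 0 <= kA) (kAs_ge0 : 0 <= kAs).
Hypothesis sqnormA_le : forall x, sqnorm (A x) <= kA * sqnorm x.
Hypothesis sqnormAs_le : forall x, sqnorm (As x) <= kAs * sqnorm x.

(* Dividing by [1 + kA + kAs] makes [0 <= PA <= I], so [0 <= KA <= I] and [KA^2 <= KA]. *)
Definition cA : C := (1 + kA + kAs)^-1.
Definition PA y := cA *: A (As y).
Definition KA y := y - PA y.
Definition KAn n := iter n KA.
Fixpoint sumKAn n y := if n is n'.+1 then y + KA (sumKAn n' y) else 0.

Lemma cA_gt0 : 0 < cA.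
Proof. by rewrite invr_gt0 -addrA (lt_le_trans ltr01) // lerDl addr_ge0. Qed.

Lemma conj_cA : cA^* = cA.
Proof. exact/conj_Creal/gtr0_real/cA_gt0. Qed.

Lemma cA_le1 k : k <= 1 + kA + kAs -> cA * k <= 1.
Proof. by move=> k_le; rewrite mulrC ler_pdivrMr ?mul1r // -invr_gt0 cA_gt0. Qed.

Lemma adjA_r x y : ip (As x) y = ip x (A y).
Proof. by rewrite (ipC hH) -adjA -(ipC hH). Qed.

Lemma PA_linear : linop PA.
Proof. by move=> a x y; rewrite /PA linAs linA scalerDr !scalerA mulrC. Qed.

Lemma KA_linear : linop KA.
Proof. by move=> a x y; rewrite /KA PA_linear scalerBr opprD addrACA. Qed.

Lemma KAn_linear n : linop (KAn n).
Proof. by elim: n => [|n IH] a x y //; rewrite /KAn /= -!/(KAn n _) IH KA_linear. Qed.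

Lemma PA_KA w : PA (KA w) = KA (PA w).
Proof. by rewrite /KA (linopB PA_linear). Qed.

Lemma ipPA_l u v : ip (PA u) v = cA * ip (As u) (As v).
Proof. by rewrite /PA (ipZl hH) adjA. Qed.

Lemma ipPA_r u v : ip u (PA v) = cA * ip (As u) (As v).
Proof. by rewrite /PA (ipZr hH) conj_cA adjA_r. Qed.

Lemma ipKA_sym u v : ip (KA u) v = ip u (KA v).
Proof. by rewrite /KA (ipBl hH) (ipBr hH) ipPA_l ipPA_r. Qed.

Lemma KA_KAn n y : KA (KAn n y) = KAn n (KA y).
Proof. by rewrite /KAn -iterS iterSr. Qed.

Lemma ipKAn_sym n u v : ip (KAn n u) v = ip u (KAn n v).
Proof. by elim: n u v => [|n IH] u v //=; rewrite ipKA_sym IH -KA_KAn. Qed.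

Lemma ipKA_diag v : ip (KA v) v = sqnorm v - cA * sqnorm (As v).
Proof. by rewrite /KA (ipBl hH) ipPA_l. Qed.

Lemma ipKA_ge0 v : 0 <= ip (KA v) v.
Proof.
rewrite ipKA_diag subr_ge0; apply: (le_trans (ler_wpM2l (ltW cA_gt0) (sqnormAs_le v))).
rewrite mulrA ler_piMl ?(sqnorm_ge0 hH) // cA_le1 //.
by rewrite addrC lerDl addr_ge0.
Qed.

Lemma ipKA_le v : ip (KA v) v <= sqnorm v.
Proof. by rewrite ipKA_diag gerBl mulr_ge0 ?(sqnorm_ge0 hH) ?ltW ?cA_gt0. Qed.

Lemma sqnormKA_le_ipKA v : sqnorm (KA v) <= ip (KA v) v.
Proof.
rewrite ipKA_diag /KA (sqnormB hH) ipPA_l ipPA_r /PA (sqnormZ hH) conj_cA.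
set w := As v.
have PAw_le : cA * cA * sqnorm (A w) <= cA * sqnorm w.
  rewrite -mulrA ler_pM2l ?cA_gt0 //.
  apply: (le_trans (ler_wpM2l (ltW cA_gt0) (sqnormA_le w))).
  rewrite mulrA ler_piMl ?(sqnorm_ge0 hH) // cA_le1 //.
  by rewrite -addrA addrCA lerDl addr_ge0.
rewrite -/(sqnorm v) -/(sqnorm w) -/(sqnorm (A w)).
have -> : sqnorm v + cA * cA * sqnorm (A w) - (cA * sqnorm w + cA * sqnorm w)
  = sqnorm v - cA * sqnorm w - (cA * sqnorm w - cA * cA * sqnorm (A w)) by ring.
by rewrite gerBl subr_ge0.
Qed.

Lemma sqnormKA_le v : sqnorm (KA v) <= sqnorm v.
Proof. exact: le_trans (sqnormKA_le_ipKA v) (ipKA_le v). Qed.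

Definition moment y j := ip (KAn j y) y.

Lemma moment_even y i : moment y (i + i) = sqnorm (KAn i y).
Proof. by rewrite /moment /KAn iterD ipKAn_sym. Qed.

Lemma moment_odd y i : moment y (i + i).+1 = ip (KA (KAn i y)) (KAn i y).
Proof. by rewrite /moment /KAn iterS iterD -/(KAn i _) KA_KAn ipKAn_sym. Qed.

Lemma moment_ge0 y j : 0 <= moment y j.
Proof.
rewrite -(odd_double_half j) -addnn; case: (odd j).
  by rewrite add1n moment_odd ipKA_ge0.
by rewrite add0n moment_even (sqnorm_ge0 hH).
Qed.

Lemma moment_nonincr y j : moment y j.+1 <= moment y j.
Proof.
rewrite -(odd_double_half j) -addnn; case: (odd j).
  rewrite add1n (_ : (_ + _).+2 = j./2.+1 + j./2.+1)%N; last by rewrite addnS addSn.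
  by rewrite moment_odd moment_even /KAn iterS sqnormKA_le_ipKA.
by rewrite add0n moment_odd moment_even ipKA_le.
Qed.

Lemma moment_le y i j : (i <= j)%N -> moment y j <= moment y i.
Proof. by move=> ij; apply: (nonincnP (moment_nonincr y)); rewrite leEnat. Qed.

Lemma sqnormB_KAn y n m :
  sqnorm (KAn n y - KAn m y) = moment y (n + n) + moment y (m + m) - (moment y (n + m) *+ 2).
Proof.
rewrite (sqnormB hH) -!moment_even mulr2n.
by congr (_ - (_ + _)); rewrite -ipKAn_sym /moment /KAn -iterD // addnC.
Qed.

Lemma KAn_cauchy y : exists z, converges (fun n => KAn n y) z.
Proof.
apply: (cauchy_converges hH) => e e_gt0.
have [N hN] := ge0_seq_almost_inf (moment_ge0 y) e_gt0.
suff ordered_close n m : (N <= n)%N -> (n <= m)%N -> sqnorm (KAn n y - KAn m y) < e.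
  exists N => m n Nm Nn; case: (leqP m n) => [mn|/ltnW nm]; first exact: ordered_close.
  by rewrite -(sqnormN hH) opprB; apply: ordered_close.
move=> Nn nm; rewrite sqnormB_KAn.
apply: le_lt_trans (hN (m + m)%N).
have nn_le_N : moment y (n + n) <= moment y N by apply/moment_le/(leq_trans Nn)/leq_addr.
have mm_le_nm : moment y (m + m) <= moment y (n + m) by apply: moment_le; rewrite leq_add2r.
rewrite -subr_ge0 (_ : _ - _ = moment y N - moment y (n + n) +
                               (moment y (n + m) - moment y (m + m)) *+ 2).
  by rewrite addr_ge0 ?mulrn_wge0 // subr_ge0.
by rewrite !mulr2n; ring.
Qed.

Lemma sub_KAn n y : y - KAn n y = PA (sumKAn n y).
Proof.
elim: n => [|n IH] /=; first by rewrite subrr /PA (linop0 linAs) (linop0 linA) scaler0.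
rewrite (linopD PA_linear) PA_KA -IH (linopB KA_linear) {2}/KA.
by rewrite addrA [PA y + _]addrC subrK.
Qed.

Section Limit.
(* [Q] turns out to be the projection onto [ker A* = (range A)^perp]. *)
Variable Q : H -> H.
Hypothesis KAn_cvg_Q : forall y, converges (fun n => KAn n y) (Q y).

Lemma Q_linear : linop Q.
Proof.
move=> a x y; apply: (converges_unique hH (KAn_cvg_Q _)).
rewrite (_ : (fun n => _) = fun n => a *: KAn n x + KAn n y).
  exact: convergesZD.
by apply: funext => n; rewrite KAn_linear.
Qed.

Lemma KA_Q y : KA (Q y) = Q y.
Proof.
apply: (converges_unique hH (u := fun n => KAn n.+1 y) _ (converges_shift (KAn_cvg_Q y))).
apply: (converges_dominated hH (KAn_cvg_Q y) ler01) => n.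
by rewrite mul1r /KAn iterS -(linopB KA_linear) sqnormKA_le.
Qed.

Lemma As_Q y : As (Q y) = 0.
Proof.
have PA_Q : PA (Q y) = 0.
  by apply: oppr_inj; apply: (addrI (Q y)); rewrite oppr0 addr0 -[RHS]KA_Q.
apply: (sqnorm_eq0 hH); apply: (mulfI (lt0r_neq0 cA_gt0)).
by rewrite mulr0 -ipPA_l PA_Q (ip0l hH).
Qed.

Lemma KAn_Q n y : KAn n (Q y) = Q y.
Proof. by elim: n => [|n IH] //; rewrite /KAn iterS -/(KAn n _) IH KA_Q. Qed.

Lemma Q_A x : Q (A x) = 0.
Proof.
apply: (sqnorm_eq0 hH); apply/le_anti; rewrite (sqnorm_ge0 hH) andbT.
apply/ler_addgt0Pr => e e_gt0; rewrite add0r.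
have [N /(_ N (leqnn N))] := KAn_cvg_Q (A x) e_gt0.
have ipAx_Q : ip (KAn N (A x)) (Q (A x)) = 0 by rewrite ipKAn_sym KAn_Q adjA As_Q (ip0r hH).
rewrite (sqnormB hH) ipAx_Q (ipC hH) ipAx_Q conjC0 addr0 subr0 => lt_e.
by apply: ltW (le_lt_trans _ lt_e); rewrite lerDr (sqnorm_ge0 hH).
Qed.

Lemma sqnorm_subQ_le y : sqnorm (y - Q y) <= 2%:R * sqnorm y.
Proof.
apply/ler_addgt0Pr => e e_gt0.
have e2_gt0 : 0 < e / 2%:R by rewrite divr_gt0.
have [N /(_ N (leqnn N)) KAN_close] := KAn_cvg_Q y e2_gt0.
have sub_KAN_le : sqnorm (y - KAn N y) <= sqnorm y.
  have := sqnormB_KAn y 0 N; rewrite add0n => ->.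
  by rewrite lerBlDr lerD2l mulr2n ler_wpDl ?moment_ge0 ?moment_le ?leq_addr.
have -> : y - Q y = (y - KAn N y) + (KAn N y - Q y) by rewrite addrA subrK.
apply: (le_trans (sqnormD_le hH _ _)).
rewrite (_ : _ + e = 2%:R * (sqnorm y + e / 2%:R)); last by field.
by rewrite ler_wpM2l // lerD // ltW.
Qed.

Section Compression.
Variable B : H -> H.
Hypothesis boundedB : bounded_operator ip B.

Definition BE y := B (y - Q y).

Lemma BE_bounded : bounded_operator ip BE.
Proof.
have linB := bounded_linop boundedB.
have [kB kB_ge0 sqnormB_le] := bounded_sqnorm hH boundedB.
apply: (@bounded_operator_sqnorm _ _ _ hH _ (1 + 2%:R * kB)).
- by move=> a x y; rewrite /BE Q_linear -linB scalerBr opprD addrACA.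
- by rewrite addr_ge0 // mulr_ge0.
move=> x; apply: (le_trans (sqnormB_le _)).
apply: (le_trans (ler_wpM2l kB_ge0 (sqnorm_subQ_le x))).
rewrite mulrA ler_wpM2r ?(sqnorm_ge0 hH) //.
rewrite (_ : _ ^+ 2 = kB * 2%:R + (1 + 2%:R * kB + 4%:R * kB ^+ 2)); last by ring.
by rewrite lerDl !addr_ge0 ?mulr_ge0 ?exprn_ge0.
Qed.

Lemma BE_converges y : converges (fun n => B (y - KAn n y)) (BE y).
Proof.
have [kB kB_ge0 sqnormB_le] := bounded_sqnorm hH boundedB.
have sub_KAn_cvg_Q : converges (fun n => y - KAn n y) (y - Q y).
  have := convergesZD hH (-1) (KAn_cvg_Q y) (converges_cst hH y).
  by rewrite scaleN1r addrC; under eq_fun do rewrite scaleN1r addrC.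
apply: (converges_dominated hH sub_KAn_cvg_Q kB_ge0) => n.
by rewrite /BE -(linopB (bounded_linop boundedB)).
Qed.

Lemma BE_A x : BE (A x) = B (A x).
Proof. by rewrite /BE Q_A subr0. Qed.

Lemma mem_BE M : von_neumann_algebra ip M ->
  (forall n, M (fun y => B (y - KAn n y))) -> M BE.
Proof.
move=> vnM MBn; apply: (vn_so_closed vnM BE_bounded).
exact: (in_so_closure_converges hH MBn BE_converges).
Qed.

End Compression.
End Limit.

Section Membership.
Variable M : set (H -> H).
Hypothesis vnM : von_neumann_algebra ip M.
Hypotheses (MA : M A) (MAs : M As).

Lemma mem_KA : M KA.
Proof.
have := vn_add vnM (vn_id vnM) (vn_scale vnM (- cA) (vn_mul vnM MA MAs)).
by congr M; apply: funext => y; rewrite /KA /PA scaleNr.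
Qed.

Lemma mem_KAn n : M (KAn n).
Proof.
elim: n => [|n IH]; first exact: (vn_id vnM).
by have := vn_mul vnM mem_KA IH; congr M; apply: funext => y.
Qed.

Lemma mem_sumKAn n : M (sumKAn n).
Proof.
elim: n => [|n IH].
  by have := vn_scale vnM 0 (vn_id vnM); congr M; apply: funext => y; rewrite scale0r.
by have := vn_add vnM (vn_id vnM) (vn_mul vnM mem_KA IH); congr M; apply: funext => y.
Qed.

Lemma mem_B_subKAn B n : M B -> M (fun y => B (y - KAn n y)).
Proof.
move=> MB; have := vn_mul vnM MB (vn_add vnM (vn_id vnM) (vn_scale vnM (-1) (mem_KAn n))).
by congr M; apply: funext => y /=; rewrite scaleN1r.
Qed.

(* [B (I - KA^n) = cA (B A) A* (I + KA + ... + KA^(n-1))] *)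
Lemma mem_B_subKAn_comp B n : linop B -> M (B \o A) -> M (fun y => B (y - KAn n y)).
Proof.
move=> linB MBA; have := vn_scale vnM cA (vn_mul vnM MBA (vn_mul vnM MAs (mem_sumKAn n))).
by congr M; apply: funext => y /=; rewrite sub_KAn /PA (linopZ linB).
Qed.

End Membership.

Lemma exists_cap_comp_eq M1 M2 B :
  von_neumann_algebra ip M1 -> von_neumann_algebra ip M2 ->
  M1 A -> M1 As -> M2 A -> M2 As -> M1 B -> M2 (B \o A) ->
  exists2 C, (M1 `&` M2)%classic C & C \o A = B \o A.
Proof.
move=> vn1 vn2 A1 As1 A2 As2 B1 BA2.
have [Q KAn_cvg_Q] := choice KAn_cauchy.
have boundedB := vn_bounded vn1 B1.
exists (BE Q B); last by apply: funext => x /=; rewrite BE_A.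
split; apply: mem_BE => // n.
  exact: (mem_B_subKAn vn1 A1 As1 n B1).
exact: (mem_B_subKAn_comp vn2 A2 As2 n (bounded_linop boundedB) BA2).
Qed.

End RangeProjection.

Local Open Scope classical_set_scope.

Section RightMultiplication.
Variable R : realType.
Local Notation C := (R[i])%C.
Variables (H : lmodType C) (ip : H -> H -> C).
Hypothesis hH : is_hilbert_space ip.

Lemma rmul_set_sub (M : set (H -> H)) (A : H -> H) :
  von_neumann_algebra ip M -> M A -> rmul_set M A `<=` M.
Proof. by move=> vnM MA _ [S MS <-]; apply: (vn_mul vnM). Qed.

Lemma rmul_setI_sub (M1 M2 : set (H -> H)) (A : H -> H) :
  von_neumann_algebra ip M1 -> von_neumann_algebra ip M2 -> (M1 `&` M2) A ->
  rmul_set M1 A `&` M2 `<=` rmul_set (M1 `&` M2) A.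
Proof.
move=> vn1 vn2 [A1 A2] _ [[B B1 <-] BA2].
have [As As1 adjA] := vn_adj vn1 A1.
have [As' As2 adjA'] := vn_adj vn2 A2.
rewrite -(adjoint_unique hH adjA adjA') in As2.
have [boundedA boundedAs] := (vn_bounded vn1 A1, vn_bounded vn1 As1).
have [kA kA_ge0 sqnormA_le] := bounded_sqnorm hH boundedA.
have [kAs kAs_ge0 sqnormAs_le] := bounded_sqnorm hH boundedAs.
have [C C12 CA] := exists_cap_comp_eq hH adjA (bounded_linop boundedA)
  (bounded_linop boundedAs) kA_ge0 kAs_ge0 sqnormA_le sqnormAs_le
  vn1 vn2 A1 As1 A2 As2 B1 BA2.
by exists C.
Qed.

End RightMultiplication.

Unset Implicit Arguments. Set Strict Implicit. Set Printing Implicit Defensive.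

Theorem proposition3p9 (R : realType) (H : lmodType (R[i])%C)
  (ip : H -> H -> (R[i])%C) (hH : is_hilbert_space ip)
  (R1 R2 : set (H -> H))
  (hR1 : von_neumann_algebra ip R1) (hR2 : von_neumann_algebra ip R2)
  (A : H -> H) (hA : (R1 `&` R2) A) :
  rmul_set R1 A `&` R2 = rmul_set R1 A `&` rmul_set R2 A /\
  rmul_set R1 A `&` rmul_set R2 A = rmul_set (R1 `&` R2) A.
Proof.
have R1A_R2_sub_R12A := rmul_setI_sub hH hR1 hR2 hA.
have R1A_R2A_sub_R1A_R2 : rmul_set R1 A `&` rmul_set R2 A `<=` rmul_set R1 A `&` R2.
  by apply: setIS; apply: rmul_set_sub hR2 hA.2.
have R12A_sub_R1A_R2A : rmul_set (R1 `&` R2) A `<=` rmul_set R1 A `&` rmul_set R2 A.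
  by rewrite subsetI; split; apply: image_subset; [apply: subIsetl | apply: subIsetr].
split; apply/seteqP; split.
- exact: subset_trans R1A_R2_sub_R12A R12A_sub_R1A_R2A.
- exact: R1A_R2A_sub_R1A_R2.
- exact: subset_trans R1A_R2A_sub_R1A_R2 R1A_R2_sub_R12A.
- exact: R12A_sub_R1A_R2A.
Qed.
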